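(* If $M$ is a term of $\ell\Lambda_\infty^{4S}$, $M\to_0^* N$ and $M\to_0^* L$, then there is $P$ such that $N\to_0^* P$ and $L\to_0^* P$.
   Context: Preterms: possibly infinite trees generated by $M ::= x \mid MN \mid \lambda x.M \mid \lambda^{\downarrow}x.M \mid \lambda^{\uparrow}x.M \mid \downarrow M \mid \uparrow M$ ($\downarrow M$ inductive box, $\uparrow M$ coinductive box); substitution is capture-avoiding. Patterns: $x,\downarrow x,\uparrow x,\#x,\dagger x$; environments: finite sets of patterns, each variable in at most one; $\Theta,\Xi,\Psi,\Phi$ linear environments with marked versions $\#\Theta$ etc.; $\Upsilon,\Pi$ environments with only patterns $y$, $\downarrow y$; commas are disjoint unions. A term of $\ell\Lambda_\infty^{4S}$ is a preterm $M$ with $\Gamma\vdash M$ derivable for some $\Gamma$ by: (vl) $\#\Theta,\uparrow\Xi,\dagger\Psi,x\vdash x$; (vd) $\#\Theta,\uparrow\Xi,\dagger\Psi,\#x\vdash x$; (va) $\#\Theta,\uparrow\Xi,\dagger\Psi,\dagger x\vdash x$; (a) from $\Upsilon,\#\Theta,\uparrow\Xi,\dagger\Psi\vdash M$ and $\Pi,\#\Theta,\uparrow\Xi,\dagger\Psi\vdash N$ infer $\Upsilon,\Pi,\#\Theta,\uparrow\Xi,\dagger\Psi\vdash MN$; (ll) $\Gamma,x\vdash M$ gives $\Gamma\vdash\lambda x.M$; (li)$_1$ $\Gamma,\#x\vdash M$ gives $\Gamma\vdash\lambda^\downarrow x.M$; (li)$_2$ $\Gamma,\downarrow x\vdash M$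 gives $\Gamma\vdash\lambda^\downarrow x.M$; (lc) $\Gamma,\uparrow x\vdash M$ gives $\Gamma\vdash\lambda^\uparrow x.M$; (mi) from $\Xi,\uparrow\Psi,\dagger\Phi\vdash M$ infer $\#\Theta,\downarrow\Xi,\uparrow\Psi,\dagger\Phi\vdash\downarrow M$; (mc) from $\dagger\Xi,\dagger\Psi\vdash M$ infer $\#\Theta,\uparrow\Xi,\dagger\Psi\vdash\uparrow M$; (mc) coinductive, others inductive (every infinite branch of a derivation contains infinitely many (mc)). Basic reduction: $(\lambda x.M)N\mapsto M[N/x]$, $(\lambda^\downarrow x.M)(\downarrow N)\mapsto M[N/x]$, $(\lambda^\uparrow x.M)(\uparrow N)\mapsto M[N/x]$. $M\to_0 N$ iff $M=C[L]$, $N=C[P]$, $L\mapsto P$, where $C$ is a one-hole context whose hole lies inside no coinductive box $\uparrow(\cdot)$ (it may lie inside inductive boxes); $\to_0^*$ is its reflexive-transitive closure. *)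

From Stdlib Require Import Arith.

(* Preterms: possibly infinite trees.
   Lam = lambda x, LamD = lambda^down x, LamU = lambda^up x,
   BoxD = inductive box (down M), BoxU = coinductive box (up M). *)
CoInductive term : Type :=
| Var  : nat -> term
| App  : term -> term -> term
| Lam  : term -> term
| LamD : term -> term
| LamU : term -> term
| BoxD : term -> term
| BoxU : term -> term.

CoInductive bisim : term -> term -> Prop :=
| bs_var n : bisim (Var n) (Var n)
| bs_app M M' N N' : bisim M M' -> bisim N N' -> bisim (App M N) (App M' N')
| bs_lam M M' : bisim M M' -> bisim (Lam M) (Lam M')
| bs_lamd M M' : bisim M M' -> bisim (LamD M) (LamD M')
| bs_lamu M M' : bisim M M' -> bisim (LamU M) (LamU M')
| bs_boxd M M' : bisim M M' -> bisim (BoxD M) (BoxD M')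
| bs_boxu M M' : bisim M M' -> bisim (BoxU M) (BoxU M').

CoFixpoint lift (d k : nat) (M : term) : term :=
  match M with
  | Var n => Var (if n <? k then n else n + d)
  | App A B => App (lift d k A) (lift d k B)
  | Lam A => Lam (lift d (S k) A)
  | LamD A => LamD (lift d (S k) A)
  | LamU A => LamU (lift d (S k) A)
  | BoxD A => BoxD (lift d k A)
  | BoxU A => BoxU (lift d k A)
  end.

CoFixpoint subst (k : nat) (N M : term) : term :=
  match M with
  | Var n => if n <? k then Var n
             else if n =? k then lift k 0 N
             else Var (pred n)
  | App A B => App (subst k N A) (subst k N B)
  | Lam A => Lam (subst (S k) N A)
  | LamD A => LamD (subst (S k) N A)
  | LamU A => LamU (subst (S k) N A)
  | BoxD A => BoxD (subst k N A)
  | BoxU A => BoxU (subst k N A)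
  end.

Inductive basic : term -> term -> Prop :=
| b_lam M N P : bisim (subst 0 N M) P -> basic (App (Lam M) N) P
| b_lamd M N P : bisim (subst 0 N M) P -> basic (App (LamD M) (BoxD N)) P
| b_lamu M N P : bisim (subst 0 N M) P -> basic (App (LamU M) (BoxU N)) P.

(* Contextual closure through contexts whose hole is not inside a
   coinductive box (no BoxU case). *)
Inductive step0 : term -> term -> Prop :=
| s_base M N : basic M N -> step0 M N
| s_appl M M' N : step0 M M' -> step0 (App M N) (App M' N)
| s_appr M N N' : step0 N N' -> step0 (App M N) (App M N')
| s_lam M M' : step0 M M' -> step0 (Lam M) (Lam M')
| s_lamd M M' : step0 M M' -> step0 (LamD M) (LamD M')
| s_lamu M M' : step0 M M' -> step0 (LamU M) (LamU M')
| s_boxd M M' : step0 M M' -> step0 (BoxD M) (BoxD M').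

Definition red0 (M N : term) : Prop :=
  exists M' N', bisim M M' /\ step0 M' N' /\ bisim N' N.

Inductive red0s : term -> term -> Prop :=
| r_refl M N : bisim M N -> red0s M N
| r_step M N P : red0 M N -> red0s N P -> red0s M P.

(* Patterns: x (KLin), down x (KDown), up x (KUp), #x (KHash), dagger x (KDag). *)
Inductive kind : Type := KLin | KDown | KUp | KHash | KDag.

(* Environment: the pattern (if any) attached to each de Bruijn variable. *)
Definition env : Type := nat -> option kind.

Definition finite_env (G : env) : Prop := exists n, forall i, n <= i -> G i = None.

Definition ext (k : kind) (G : env) : env :=
  fun n => match n with 0 => Some k | S m => G m end.

(* patterns allowed in #Theta, up Xi, dagger Psi *)
Definition shared (o : option kind) : Prop :=
  match o with
  | None | Some KHash | Some KUp | Some KDag => True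
  | _ => False
  end.

(* #Theta, up Xi, dagger Psi, k x *)
Definition var_env (G : env) (x : nat) (k : kind) : Prop :=
  G x = Some k /\ forall y, y <> x -> shared (G y).

(* G = Upsilon, Pi, #Theta, up Xi, dagger Psi with
   G1 = Upsilon, #Theta, up Xi, dagger Psi and G2 = Pi, #Theta, up Xi, dagger Psi *)
Definition split_env (G G1 G2 : env) : Prop :=
  forall i, match G i with
            | None => G1 i = None /\ G2 i = None
            | Some KLin | Some KDown =>
                (G1 i = G i /\ G2 i = None) \/ (G1 i = None /\ G2 i = G i)
            | Some k => G1 i = Some k /\ G2 i = Some k
            end.

(* rule (mi): conclusion #Theta, down Xi, up Psi, dagger Phi;
   premise Xi, up Psi, dagger Phi *)
Definition mi_ok (G : env) : Prop := forall i, G i <> Some KLin.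
Definition mi_env (G : env) : env :=
  fun i => match G i with
           | Some KDown => Some KLin
           | Some KUp => Some KUp
           | Some KDag => Some KDag
           | _ => None
           end.

(* rule (mc): conclusion #Theta, up Xi, dagger Psi;
   premise dagger Xi, dagger Psi *)
Definition mc_ok (G : env) : Prop := forall i, shared (G i).
Definition mc_env (G : env) : env :=
  fun i => match G i with
           | Some KUp | Some KDag => Some KDag
           | _ => None
           end.

(* Inductive rules; R stands for derivability of (mc) premises. *)
Inductive typ_step (R : env -> term -> Prop) : env -> term -> Prop :=
| t_vl G x : var_env G x KLin -> typ_step R G (Var x)
| t_vd G x : var_env G x KHash -> typ_step R G (Var x)
| t_va G x : var_env G x KDag -> typ_step R G (Var x)
| t_a G G1 G2 M N :
    split_env G G1 G2 -> typ_step R G1 M -> typ_step R G2 N ->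
    typ_step R G (App M N)
| t_ll G M : typ_step R (ext KLin G) M -> typ_step R G (Lam M)
| t_li1 G M : typ_step R (ext KHash G) M -> typ_step R G (LamD M)
| t_li2 G M : typ_step R (ext KDown G) M -> typ_step R G (LamD M)
| t_lc G M : typ_step R (ext KUp G) M -> typ_step R G (LamU M)
| t_mi G M : mi_ok G -> typ_step R (mi_env G) M -> typ_step R G (BoxD M)
| t_mc G M : mc_ok G -> R (mc_env G) M -> typ_step R G (BoxU M).

(* Mixed derivability: coinductive only through (mc), i.e. every infinite
   branch contains infinitely many (mc). *)
CoInductive typ (G : env) (M : term) : Prop :=
| typ_fold : typ_step typ G M -> typ G M.

Definition is_term (M : term) : Prop := exists G, finite_env G /\ typ G M.

From Stdlib Require Import Arith Lia.

(* Tait--Martin-Löf: a parallel reduction [par] that, like [->_0], never reduces inside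
   a coinductive box satisfies ->_0 ⊆ par ⊆ ->_0^*, so it suffices to show that [par]
   has the diamond property.  This holds on the terms satisfying the invariant [wf],
   which is all that typability is used for: a term is finite outside its coinductive
   boxes, and variables bound by λ and λ↓ never occur inside a coinductive box.  The
   second condition is what makes [par] stable under substitution of a reduct: since
   [par] does not reduce under coinductive boxes, a reduct substituted there could
   not be matched by the other side of the diamond. *)

(* Matching on a cofixpoint application forces it to unfold one step. *)
Definition term_eta (t : term) : term :=
  match t with
  | Var n => Var n
  | App a b => App a b
  | Lam a => Lam a
  | LamD a => LamD a
  | LamU a => LamU a
  | BoxD a => BoxD a
  | BoxU a => BoxU a
  end.

Lemma term_etaE t : t = term_eta t.
Proof. destruct t; reflexivity. Qed.

Ltac unfold_cofix :=
  rewrite (term_etaE (lift _ _ _)) || rewrite (term_etaE (subst _ _ _)); reflexivity.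

Lemma lift_var d k n : lift d k (Var n) = Var (if n <? k then n else n + d).
Proof. unfold_cofix. Qed.
Lemma lift_app d k a b : lift d k (App a b) = App (lift d k a) (lift d k b).
Proof. unfold_cofix. Qed.
Lemma lift_lam d k a : lift d k (Lam a) = Lam (lift d (S k) a).
Proof. unfold_cofix. Qed.
Lemma lift_lamd d k a : lift d k (LamD a) = LamD (lift d (S k) a).
Proof. unfold_cofix. Qed.
Lemma lift_lamu d k a : lift d k (LamU a) = LamU (lift d (S k) a).
Proof. unfold_cofix. Qed.
Lemma lift_boxd d k a : lift d k (BoxD a) = BoxD (lift d k a).
Proof. unfold_cofix. Qed.
Lemma lift_boxu d k a : lift d k (BoxU a) = BoxU (lift d k a).
Proof. unfold_cofix. Qed.

Lemma subst_var k N n : subst k N (Var n) =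
  if n <? k then Var n else if n =? k then lift k 0 N else Var (pred n).
Proof.
  rewrite (term_etaE (subst _ _ _)); simpl.
  destruct (n <? k), (n =? k); try reflexivity; symmetry; apply term_etaE.
Qed.
Lemma subst_app k N a b : subst k N (App a b) = App (subst k N a) (subst k N b).
Proof. unfold_cofix. Qed.
Lemma subst_lam k N a : subst k N (Lam a) = Lam (subst (S k) N a).
Proof. unfold_cofix. Qed.
Lemma subst_lamd k N a : subst k N (LamD a) = LamD (subst (S k) N a).
Proof. unfold_cofix. Qed.
Lemma subst_lamu k N a : subst k N (LamU a) = LamU (subst (S k) N a).
Proof. unfold_cofix. Qed.
Lemma subst_boxd k N a : subst k N (BoxD a) = BoxD (subst k N a).
Proof. unfold_cofix. Qed.
Lemma subst_boxu k N a : subst k N (BoxU a) = BoxU (subst k N a).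
Proof. unfold_cofix. Qed.

#[global] Hint Rewrite lift_var lift_app lift_lam lift_lamd lift_lamu lift_boxd lift_boxu
  subst_var subst_app subst_lam subst_lamd subst_lamu subst_boxd subst_boxu : term_unfold.

Lemma bisim_refl : forall M, bisim M M.
Proof. cofix CH; intros [n|a b|a|a|a|a|a]; constructor; apply CH. Qed.

Lemma bisim_sym : forall M N, bisim M N -> bisim N M.
Proof. cofix CH; intros M N H; destruct H; constructor; apply CH; assumption. Qed.

Lemma bisim_trans : forall M N P, bisim M N -> bisim N P -> bisim M P.
Proof.
  cofix CH; intros M N P H1 H2; destruct H1; inversion H2; subst; constructor;
    eapply CH; eassumption.
Qed.

Lemma bisim_var x y : x = y -> bisim (Var x) (Var y).
Proof. intros ->; constructor. Qed.

Lemma lift_bisim : forall d k A A', bisim A A' -> bisim (lift d k A) (lift d k A').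
Proof.
  cofix CH; intros d k A A' H; destruct H; autorewrite with term_unfold;
    constructor; apply CH; assumption.
Qed.

Lemma subst_bisim : forall k A A' B B',
  bisim A A' -> bisim B B' -> bisim (subst k A B) (subst k A' B').
Proof.
  cofix CH; intros k A A' B B' HA H; destruct H; autorewrite with term_unfold;
    try (constructor; apply CH; assumption).
  destruct (n <? k); [constructor|].
  destruct (n =? k); [apply lift_bisim; assumption | constructor].
Qed.

Ltac nat_cases := repeat match goal with
  | |- context[?a <? ?b] => destruct (Nat.ltb_spec a b)
  | |- context[?a =? ?b] => destruct (Nat.eqb_spec a b) end.

Ltac index_cases :=
  repeat (autorewrite with term_unfold; nat_cases);
  try (exfalso; lia); try (apply bisim_var; lia).

Lemma lift_lift : forall A c i k j, j <= i <= j + k ->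
  bisim (lift c i (lift k j A)) (lift (c + k) j A).
Proof.
  cofix CH; intros [n|a b|a|a|a|a|a] c i k j H; autorewrite with term_unfold;
    try (constructor; apply CH; lia).
  index_cases.
Qed.

(* The index equations such as [m = i + c] let [apply CH] match the shifted indices
   under binders. *)
Lemma lift_lift_comm : forall E d i j c m, j <= c -> m = i + c ->
  bisim (lift d m (lift i j E)) (lift i j (lift d c E)).
Proof.
  cofix CH; intros [n|a b|a|a|a|a|a] d i j c m H Hm; autorewrite with term_unfold;
    try (constructor; apply CH; lia).
  subst m; index_cases.
Qed.

Lemma subst_lift_cancel : forall A c X d i, i <= c <= i + d ->
  bisim (subst c X (lift (S d) i A)) (lift d i A).
Proof.
  cofix CH; intros [n|a b|a|a|a|a|a] c X d i H; autorewrite with term_unfold;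
    try (constructor; apply CH; lia).
  index_cases.
Qed.

Lemma subst_lift_comm : forall E c k i A m, m = c + k -> i <= k ->
  bisim (subst m A (lift c i E)) (lift c i (subst k A E)).
Proof.
  cofix CH; intros [n|a b|a|a|a|a|a] c k i A m Hm H; autorewrite with term_unfold;
    try (constructor; apply CH; lia).
  subst m; index_cases.
  apply bisim_sym; replace (n + c) with (c + k) by lia; apply lift_lift; lia.
Qed.

Lemma lift_subst : forall D d i c E m, m = i + c ->
  bisim (lift d m (subst i E D)) (subst i (lift d c E) (lift d (S m) D)).
Proof.
  cofix CH; intros [n|a b|a|a|a|a|a] d i c E m Hm; autorewrite with term_unfold;
    try (constructor; apply CH; lia).
  subst m; index_cases.
  apply lift_lift_comm; lia.
Qed.

Lemma subst_subst : forall D c k A E m, m = c + k ->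
  bisim (subst m A (subst c E D)) (subst c (subst k A E) (subst (S m) A D)).
Proof.
  cofix CH; intros [n|a b|a|a|a|a|a] c k A E m Hm; autorewrite with term_unfold;
    try (constructor; apply CH; lia).
  subst m; index_cases.
  - apply subst_lift_comm; lia.
  - apply bisim_sym; replace n with (S (c + k)) by lia; apply subst_lift_cancel; lia.
Qed.

Lemma lift_subst0 d c E D :
  bisim (lift d c (subst 0 E D)) (subst 0 (lift d c E) (lift d (S c) D)).
Proof. apply lift_subst; reflexivity. Qed.

Lemma subst_subst0 k A E D :
  bisim (subst k A (subst 0 E D)) (subst 0 (subst k A E) (subst (S k) A D)).
Proof. apply subst_subst; reflexivity. Qed.

CoInductive fresh : nat -> term -> Prop :=
| fr_var j n : n <> j -> fresh j (Var n)
| fr_app j A B : fresh j A -> fresh j B -> fresh j (App A B)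
| fr_lam j A : fresh (S j) A -> fresh j (Lam A)
| fr_lamd j A : fresh (S j) A -> fresh j (LamD A)
| fr_lamu j A : fresh (S j) A -> fresh j (LamU A)
| fr_boxd j A : fresh j A -> fresh j (BoxD A)
| fr_boxu j A : fresh j A -> fresh j (BoxU A).

Lemma fresh_bisim : forall j M M', fresh j M -> bisim M M' -> fresh j M'.
Proof.
  cofix CH; intros j M M' H E; destruct E; inversion H; subst;
    constructor; eauto.
Qed.

Lemma fresh_lift_range : forall A d c j, c <= j < c + d -> fresh j (lift d c A).
Proof.
  cofix CH; intros [n|a b|a|a|a|a|a] d c j H; autorewrite with term_unfold;
    constructor; try (apply CH; lia).
  nat_cases; lia.
Qed.

Lemma fresh_lift_lt : forall A d c i, i < c -> fresh i A -> fresh i (lift d c A).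
Proof.
  cofix CH; intros [n|a b|a|a|a|a|a] d c i H HA; inversion HA; subst;
    autorewrite with term_unfold; constructor; try (apply CH; auto; lia).
  nat_cases; lia.
Qed.

Lemma fresh_lift_ge : forall A d c i, c <= i -> fresh i A -> fresh (i + d) (lift d c A).
Proof.
  cofix CH; intros [n|a b|a|a|a|a|a] d c i H HA; inversion HA; subst;
    autorewrite with term_unfold; constructor;
    try (apply CH; auto; lia); try (apply (CH a d (S c) (S i)); auto; lia).
  nat_cases; lia.
Qed.

Lemma fresh_subst_lt : forall A C j k, j < k -> fresh j C -> fresh j (subst k A C).
Proof.
  cofix CH; intros A [n|a b|a|a|a|a|a] j k H HC; inversion HC; subst;
    autorewrite with term_unfold; try (constructor; apply CH; auto; lia).
  nat_cases; first [constructor; lia | apply fresh_lift_range; lia].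
Qed.

Lemma fresh_subst_unused : forall A C j k,
  k <= j -> fresh k C -> fresh (S j) C -> fresh j (subst k A C).
Proof.
  cofix CH; intros A [n|a b|a|a|a|a|a] j k H HC HC'; inversion HC; inversion HC'; subst;
    autorewrite with term_unfold; try (constructor; apply CH; auto; lia).
  nat_cases; first [lia | constructor; lia].
Qed.

Lemma fresh_subst_ge : forall A C j k,
  k <= j -> fresh (S j) C -> fresh (j - k) A -> fresh j (subst k A C).
Proof.
  cofix CH; intros A [n|a b|a|a|a|a|a] j k H HC HA; inversion HC; subst;
    autorewrite with term_unfold; try (constructor; apply CH; auto; lia);
    try (constructor; apply (CH A a (S j) (S k)); auto; lia).
  nat_cases; try (constructor; lia).
  replace j with (j - k + k) by lia; apply fresh_lift_ge; [lia | assumption].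
Qed.

Lemma subst_fresh_irrelevant : forall C k A A',
  fresh k C -> bisim (subst k A C) (subst k A' C).
Proof.
  cofix CH; intros [n|a b|a|a|a|a|a] k A A' H; inversion H; subst;
    autorewrite with term_unfold; try (constructor; apply CH; assumption).
  nat_cases; try lia; constructor.
Qed.

(* [j] does not occur inside a coinductive box of [M]; being inductive, [boxu_fresh j M]
   also forces [M] to be finite outside its coinductive boxes. *)
Inductive boxu_fresh : nat -> term -> Prop :=
| bf_var j n : boxu_fresh j (Var n)
| bf_app j A B : boxu_fresh j A -> boxu_fresh j B -> boxu_fresh j (App A B)
| bf_lam j A : boxu_fresh (S j) A -> boxu_fresh j (Lam A)
| bf_lamd j A : boxu_fresh (S j) A -> boxu_fresh j (LamD A)
| bf_lamu j A : boxu_fresh (S j) A -> boxu_fresh j (LamU A)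
| bf_boxd j A : boxu_fresh j A -> boxu_fresh j (BoxD A)
| bf_boxu j A : fresh j A -> boxu_fresh j (BoxU A).
#[global] Hint Constructors boxu_fresh : core.

Inductive wf_step (R : term -> Prop) : term -> Prop :=
| ws_var n : wf_step R (Var n)
| ws_app A B : wf_step R A -> wf_step R B -> wf_step R (App A B)
| ws_lam A : wf_step R A -> boxu_fresh 0 A -> wf_step R (Lam A)
| ws_lamd A : wf_step R A -> boxu_fresh 0 A -> wf_step R (LamD A)
| ws_lamu A : wf_step R A -> wf_step R (LamU A)
| ws_boxd A : wf_step R A -> wf_step R (BoxD A)
| ws_boxu A : R A -> wf_step R (BoxU A).
#[global] Hint Constructors wf_step : core.

Lemma boxu_fresh_bisim j M M' : boxu_fresh j M -> bisim M M' -> boxu_fresh j M'.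
Proof.
  intros H; revert M'; induction H; intros M' E; inversion E; subst; eauto.
  constructor; eapply fresh_bisim; eauto.
Qed.

Lemma boxu_fresh_lift_lt A d c i : i < c -> boxu_fresh i A -> boxu_fresh i (lift d c A).
Proof.
  intros Hc H; revert c Hc; induction H; intros c Hc; autorewrite with term_unfold;
    eauto using fresh_lift_lt with arith.
Qed.

Lemma boxu_fresh_lift_ge A d c i : c <= i -> boxu_fresh i A -> boxu_fresh (i + d) (lift d c A).
Proof.
  intros Hc H; revert c Hc; induction H; intros c Hc; autorewrite with term_unfold;
    try (constructor; apply IHboxu_fresh; lia); eauto using fresh_lift_ge.
Qed.

Lemma boxu_fresh_lift_range R A d c j :
  wf_step R A -> c <= j < c + d -> boxu_fresh j (lift d c A).
Proof.
  intros H; revert c j; induction H; intros c j Hc; autorewrite with term_unfold;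
    try (constructor; apply IHwf_step; lia); eauto.
  constructor; apply fresh_lift_range; lia.
Qed.

Lemma fresh_boxu_fresh R A i : wf_step R A -> fresh i A -> boxu_fresh i A.
Proof.
  intros H; revert i; induction H; intros i Hi; inversion Hi; subst; eauto.
Qed.

Lemma boxu_fresh_subst_lt R A B j k :
  j < k -> boxu_fresh j B -> wf_step R A -> boxu_fresh j (subst k A B).
Proof.
  intros Hk HB HA; revert k Hk; induction HB; intros k Hk; autorewrite with term_unfold;
    try (constructor; apply IHHB; lia); eauto.
  - nat_cases; eauto. eapply boxu_fresh_lift_range; eauto; lia.
  - constructor; apply fresh_subst_lt; auto.
Qed.

Lemma boxu_fresh_subst_ge A B j k :
  k <= j -> boxu_fresh (S j) B -> boxu_fresh (j - k) A -> boxu_fresh k B ->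
  boxu_fresh j (subst k A B).
Proof.
  intros Hk HB. remember (S j) as sj eqn:E. revert j k E Hk.
  induction HB; intros j' k E Hk HA HB'; subst; inversion HB'; subst;
    autorewrite with term_unfold; try (constructor; eauto; eapply IHHB; eauto; lia).
  - nat_cases; eauto.
    replace j' with (j' - k + k) by lia; apply boxu_fresh_lift_ge; [lia | assumption].
  - constructor; apply fresh_subst_unused; auto.
Qed.

Lemma boxu_fresh_subst_ge_fresh R A B j k :
  k <= j -> boxu_fresh (S j) B -> fresh (j - k) A -> wf_step R A ->
  boxu_fresh j (subst k A B).
Proof.
  intros Hk HB. remember (S j) as sj eqn:E. revert j k E Hk.
  induction HB; intros j' k E Hk HA HwA; subst; autorewrite with term_unfold;
    try (constructor; eauto; eapply IHHB; eauto; lia).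
  - nat_cases; eauto. replace j' with (j' - k + k) by lia.
    apply boxu_fresh_lift_ge; [lia | eapply fresh_boxu_fresh; eauto].
  - constructor; apply fresh_subst_ge; auto.
Qed.

(** * Well-formed terms *)

(* The greatest fixed point of [wf_step]: coinduction goes through [BoxU] only. *)
Definition wf (M : term) : Prop :=
  exists R : term -> Prop, (forall X, R X -> wf_step R X) /\ R M.

Lemma wf_step_mono (R S : term -> Prop) : (forall X, R X -> S X) ->
  forall M, wf_step R M -> wf_step S M.
Proof. intros H M HM; induction HM; auto. Qed.

Lemma wf_unfold M : wf M -> wf_step wf M.
Proof.
  intros [R [HR HM]]; eapply wf_step_mono; [|apply HR; exact HM].
  intros X HX; exists R; auto.
Qed.

Lemma wf_fold M : wf_step wf M -> wf M.
Proof.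
  intros H; exists (wf_step wf); split; auto.
  intros X HX; eapply wf_step_mono; [|exact HX]; apply wf_unfold.
Qed.

Lemma wf_coind (R : term -> Prop) :
  (forall X, R X -> wf_step (fun X => R X \/ wf X) X) -> forall M, R M -> wf M.
Proof.
  intros H M HM; exists (fun X => R X \/ wf X); split; auto.
  intros X [HX|HX]; auto.
  eapply wf_step_mono; [|apply wf_unfold; exact HX]; auto.
Qed.

Lemma wf_step_or_wf (R : term -> Prop) M : wf M -> wf_step (fun X => R X \/ wf X) M.
Proof. intros H; eapply wf_step_mono; [|apply wf_unfold; exact H]; auto. Qed.

Lemma wf_bisim M M' : wf M -> bisim M M' -> wf M'.
Proof.
  intros H E; apply (wf_coind (fun X => exists Y, wf Y /\ bisim Y X)); [|eauto].
  clear; intros X [Y [HY E]]; apply wf_unfold in HY; revert X E.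
  induction HY; intros X E; inversion E; subst; eauto using boxu_fresh_bisim.
Qed.

Lemma wf_lift A d c : wf A -> wf (lift d c A).
Proof.
  intros H; apply (wf_coind (fun X => exists A c, X = lift d c A /\ wf A)); [|eauto].
  clear; intros X [A [c [-> HA]]]; apply wf_unfold in HA; revert c.
  induction HA; intros c; autorewrite with term_unfold; eauto.
  - constructor; eauto; apply boxu_fresh_lift_lt; auto; lia.
  - constructor; eauto; apply boxu_fresh_lift_lt; auto; lia.
  - constructor; left; eauto.
Qed.

Lemma wf_subst A B k : wf A -> wf B -> wf (subst k A B).
Proof.
  intros HA HB; apply (wf_coind (fun X => exists B k, X = subst k A B /\ wf B)); [|eauto].
  clear HB k B; intros X [B [k [-> HB]]]; apply wf_unfold in HB; revert k.
  induction HB; intros k; autorewrite with term_unfold; eauto.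
  - nat_cases; auto; apply wf_step_or_wf, wf_lift, HA.
  - constructor; eauto; eapply boxu_fresh_subst_lt; eauto; [lia | apply wf_unfold, HA].
  - constructor; eauto; eapply boxu_fresh_subst_lt; eauto; [lia | apply wf_unfold, HA].
  - constructor; left; eauto.
Qed.

Lemma wf_app A B : wf (App A B) -> wf A /\ wf B.
Proof. intros H; apply wf_unfold in H; inversion H; subst; split; apply wf_fold; auto. Qed.
Lemma wf_lam A : wf (Lam A) -> wf A /\ boxu_fresh 0 A.
Proof. intros H; apply wf_unfold in H; inversion H; subst; split; try apply wf_fold; auto. Qed.
Lemma wf_lamd A : wf (LamD A) -> wf A /\ boxu_fresh 0 A.
Proof. intros H; apply wf_unfold in H; inversion H; subst; split; try apply wf_fold; auto. Qed.
Lemma wf_lamu A : wf (LamU A) -> wf A.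
Proof. intros H; apply wf_unfold in H; inversion H; subst; apply wf_fold; auto. Qed.
Lemma wf_boxd A : wf (BoxD A) -> wf A.
Proof. intros H; apply wf_unfold in H; inversion H; subst; apply wf_fold; auto. Qed.
Lemma wf_boxu A : wf (BoxU A) -> wf A.
Proof. intros H; apply wf_unfold in H; inversion H; subst; auto. Qed.

(** * Parallel reduction *)

Inductive par : term -> term -> Prop :=
| p_var n : par (Var n) (Var n)
| p_app A A' B B' : par A A' -> par B B' -> par (App A B) (App A' B')
| p_lam A A' : par A A' -> par (Lam A) (Lam A')
| p_lamd A A' : par A A' -> par (LamD A) (LamD A')
| p_lamu A A' : par A A' -> par (LamU A) (LamU A')
| p_boxd A A' : par A A' -> par (BoxD A) (BoxD A')
| p_boxu A A' : bisim A A' -> par (BoxU A) (BoxU A')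
| p_beta D D' E E' P :
    par D D' -> par E E' -> bisim (subst 0 E' D') P -> par (App (Lam D) E) P
| p_betad D D' E E' P :
    par D D' -> par E E' -> bisim (subst 0 E' D') P -> par (App (LamD D) (BoxD E)) P
| p_betau D D' E E' P :
    par D D' -> bisim E E' -> bisim (subst 0 E' D') P -> par (App (LamU D) (BoxU E)) P.
#[global] Hint Constructors par : core.

Lemma par_bisim_r M N N' : par M N -> bisim N N' -> par M N'.
Proof.
  intros H; revert N'; induction H; intros N0 E0;
    try (inversion E0; subst; eauto using bisim_trans; fail); eauto using bisim_trans.
Qed.

Lemma par_bisim_l M0 M N : bisim M0 M -> par M N -> par M0 N.
Proof.
  intros E H; revert M0 E; induction H; intros M0 E0; inversion E0; subst;
    eauto using bisim_trans, bisim_sym.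
  - match goal with H : bisim _ (Lam _) |- _ => inversion H; subst end; eauto.
  - match goal with H : bisim _ (LamD _) |- _ => inversion H; subst end;
    match goal with H : bisim _ (BoxD _) |- _ => inversion H; subst end; eauto.
  - match goal with H : bisim _ (LamU _) |- _ => inversion H; subst end;
    match goal with H : bisim _ (BoxU _) |- _ => inversion H; subst end;
    eauto using bisim_trans.
Qed.

Lemma par_refl R M : wf_step R M -> par M M.
Proof. intros H; induction H; auto using bisim_refl. Qed.

Lemma lift_contractum d c E D P :
  bisim (subst 0 E D) P -> bisim (subst 0 (lift d c E) (lift d (S c) D)) (lift d c P).
Proof. intros H; eapply bisim_trans; [apply bisim_sym, lift_subst0 | apply lift_bisim, H]. Qed.

Lemma subst_contractum k A E D P :
  bisim (subst 0 E D) P -> bisim (subst 0 (subst k A E) (subst (S k) A D)) (subst k A P).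
Proof.
  intros H; eapply bisim_trans; [apply bisim_sym, subst_subst0 |].
  apply subst_bisim; [apply bisim_refl | exact H].
Qed.

Lemma par_lift A A' d c : par A A' -> par (lift d c A) (lift d c A').
Proof.
  intros H; revert c; induction H; intros c; autorewrite with term_unfold;
    eauto using lift_bisim, lift_contractum.
Qed.

Lemma subst_bisim_fresh k A A' E E' :
  fresh k E -> bisim E E' -> bisim (subst k A E) (subst k A' E').
Proof.
  intros HE H; eapply bisim_trans; [apply subst_bisim; [apply bisim_refl | exact H] |].
  apply subst_fresh_irrelevant; eapply fresh_bisim; eauto.
Qed.

Ltac invert_boxu_fresh :=
  repeat match goal with
  | H : boxu_fresh _ (?c _) |- _ => inversion H; subst; clear H
  | H : boxu_fresh _ (?c _ _) |- _ => inversion H; subst; clear H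
  end.

(* Substituting a reduct [A'] for [A] is only sound when [k] does not occur under a
   coinductive box, because [par] does not reduce inside those boxes. *)
Lemma par_subst A A' B B' k : wf A -> par B B' ->
  bisim A A' \/ (par A A' /\ boxu_fresh k B) -> par (subst k A B) (subst k A' B').
Proof.
  intros HA H; revert k; induction H; intros k Hc;
    (destruct Hc as [Hb|[Hp Hn]]; [|invert_boxu_fresh]); autorewrite with term_unfold;
    try (constructor; (apply IHpar || apply IHpar1 || apply IHpar2); tauto).
  - nat_cases; auto.
    eapply par_bisim_r; [eapply par_refl, wf_unfold, wf_lift, HA | apply lift_bisim, Hb].
  - nat_cases; auto; apply par_lift, Hp.
  - constructor; apply subst_bisim; auto.
  - constructor; apply subst_bisim_fresh; auto.
  - eapply p_beta; [apply IHpar1 | apply IHpar2 | apply subst_contractum; eauto]; tauto.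
  - eapply p_beta; [apply IHpar1 | apply IHpar2 | apply subst_contractum; eauto]; tauto.
  - eapply p_betad; [apply IHpar1 | apply IHpar2 | apply subst_contractum; eauto]; tauto.
  - eapply p_betad; [apply IHpar1 | apply IHpar2 | apply subst_contractum; eauto]; tauto.
  - eapply p_betau;
      [apply IHpar; tauto | apply subst_bisim; eauto | apply subst_contractum; eauto].
  - eapply p_betau;
      [apply IHpar; tauto | apply subst_bisim_fresh; eauto | apply subst_contractum; eauto].
Qed.

Lemma par_boxu_fresh M N j : par M N -> wf M -> boxu_fresh j M -> boxu_fresh j N.
Proof.
  intros H; revert j; induction H; intros j HM Hj; invert_boxu_fresh.
  - constructor.
  - apply wf_app in HM as [? ?]; eauto.
  - apply wf_lam in HM as [? ?]; eauto.
  - apply wf_lamd in HM as [? ?]; eauto.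
  - apply wf_lamu in HM; eauto.
  - apply wf_boxd in HM; eauto.
  - constructor; eapply fresh_bisim; eauto.
  - apply wf_app in HM as [HL HE]; apply wf_lam in HL as [HD HD0].
    eapply boxu_fresh_bisim; [|eassumption].
    apply boxu_fresh_subst_ge; [lia | eauto | rewrite Nat.sub_0_r; eauto | eauto].
  - apply wf_app in HM as [HL HE]; apply wf_lamd in HL as [HD HD0]; apply wf_boxd in HE.
    eapply boxu_fresh_bisim; [|eassumption].
    apply boxu_fresh_subst_ge; [lia | eauto | rewrite Nat.sub_0_r; eauto | eauto].
  - apply wf_app in HM as [HL HE]; apply wf_lamu in HL; apply wf_boxu in HE.
    eapply boxu_fresh_bisim; [|eassumption].
    eapply boxu_fresh_subst_ge_fresh; [lia | eauto | rewrite Nat.sub_0_r | ].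
    + eapply fresh_bisim; eauto.
    + apply wf_unfold; eapply wf_bisim; eauto.
Qed.

Lemma par_wf M N : par M N -> wf M -> wf N.
Proof.
  intros H; induction H; intros HM; auto.
  - apply wf_app in HM as [? ?]; apply wf_fold; constructor; apply wf_unfold; auto.
  - apply wf_lam in HM as [? ?]; apply wf_fold; constructor;
      [apply wf_unfold; auto | eapply par_boxu_fresh; eauto].
  - apply wf_lamd in HM as [? ?]; apply wf_fold; constructor;
      [apply wf_unfold; auto | eapply par_boxu_fresh; eauto].
  - apply wf_lamu in HM; apply wf_fold; constructor; apply wf_unfold; auto.
  - apply wf_boxd in HM; apply wf_fold; constructor; apply wf_unfold; auto.
  - apply wf_boxu in HM; apply wf_fold; constructor; eapply wf_bisim; eauto.
  - apply wf_app in HM as [HL HE]; apply wf_lam in HL as [HD _].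
    eapply wf_bisim; [|eassumption]; apply wf_subst; auto.
  - apply wf_app in HM as [HL HE]; apply wf_lamd in HL as [HD _]; apply wf_boxd in HE.
    eapply wf_bisim; [|eassumption]; apply wf_subst; auto.
  - apply wf_app in HM as [HL HE]; apply wf_lamu in HL; apply wf_boxu in HE.
    eapply wf_bisim; [|eassumption]; apply wf_subst; eauto using wf_bisim.
Qed.

(** * Diamond property *)

Lemma par_contract D1 D3 E1 E3 P : wf E1 -> par D1 D3 ->
  bisim E1 E3 \/ (par E1 E3 /\ boxu_fresh 0 D1) ->
  bisim (subst 0 E1 D1) P -> par P (subst 0 E3 D3).
Proof.
  intros HE HD Hc HP; eapply par_bisim_l; [apply bisim_sym, HP |].
  apply par_subst; auto.
Qed.

Lemma par_contract_fresh D D1 D3 E E1 E3 P : wf D -> boxu_fresh 0 D -> wf E ->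
  par D D1 -> par D1 D3 -> par E E1 -> par E1 E3 ->
  bisim (subst 0 E1 D1) P -> par P (subst 0 E3 D3).
Proof.
  intros HD HD0 HE HD1 HD3 HE1 HE3 HP.
  apply (par_contract D1 D3 E1 E3); [eapply par_wf; eauto | exact HD3 | | exact HP].
  right; split; [exact HE3 | eapply par_boxu_fresh; eauto].
Qed.

Lemma par_contract_bisim D1 D3 E E1 P : wf E -> par D1 D3 -> bisim E E1 ->
  bisim (subst 0 E1 D1) P -> par P (subst 0 E D3).
Proof.
  intros HE HD H HP; apply (par_contract D1 D3 E1 E); eauto using wf_bisim, bisim_sym.
Qed.

Definition diamond_at (M N1 : term) : Prop :=
  forall N2, par M N2 -> exists N3, par N1 N3 /\ par N2 N3.

Lemma diamond_at_congr (f : term -> term) :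
  (forall D X, par (f D) X -> exists D', X = f D' /\ par D D') ->
  (forall A A', par A A' -> par (f A) (f A')) ->
  forall D D1, diamond_at D D1 -> diamond_at (f D) (f D1).
Proof.
  intros Hinv Hpar D D1 HD N2 H2.
  destruct (Hinv _ _ H2) as [D2 [-> H]]; destruct (HD _ H) as [D3 [? ?]].
  exists (f D3); auto.
Qed.

Lemma diamond_at_congr_inv (f : term -> term) :
  (forall D X, par (f D) X -> exists D', X = f D' /\ par D D') ->
  (forall A A', par A A' -> par (f A) (f A')) ->
  (forall A A', f A = f A' -> A = A') ->
  forall D D1, diamond_at (f D) (f D1) -> diamond_at D D1.
Proof.
  intros Hinv Hpar Hinj D D1 HD D2 H2.
  destruct (HD _ (Hpar _ _ H2)) as [X [H1 H3]].
  destruct (Hinv _ _ H1) as [D3 [-> HD3]]; destruct (Hinv _ _ H3) as [D3' [E HD3']].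
  apply Hinj in E; subst; eauto.
Qed.

Lemma par_lam_redex_inv D E N : par (App (Lam D) E) N -> exists D' E',
  par D D' /\ par E E' /\ (N = App (Lam D') E' \/ bisim (subst 0 E' D') N).
Proof.
  intros H; inversion H as [|? A' ? ? HA| | | | | | | |]; subst;
    [inversion HA; subst|]; eauto 7.
Qed.

Lemma par_lamd_redex_inv D E N : par (App (LamD D) (BoxD E)) N -> exists D' E',
  par D D' /\ par E E' /\ (N = App (LamD D') (BoxD E') \/ bisim (subst 0 E' D') N).
Proof.
  intros H; inversion H as [|? A' ? B' HA HB| | | | | | | |]; subst;
    [inversion HA; inversion HB; subst|]; eauto 7.
Qed.

Lemma par_lamu_redex_inv D E N : par (App (LamU D) (BoxU E)) N -> exists D' E',
  par D D' /\ bisim E E' /\ (N = App (LamU D') (BoxU E') \/ bisim (subst 0 E' D') N).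
Proof.
  intros H; inversion H as [|? A' ? B' HA HB| | | | | | | |]; subst;
    [inversion HA; inversion HB; subst|]; eauto 7.
Qed.

(* [X] is either a contraction of the redex or a componentwise reduct; the latter
   case is the one needed by [diamond_at_app]. *)
Lemma diamond_at_lam_redex D D1 E E1 X : wf (App (Lam D) E) ->
  par D D1 -> par E E1 -> diamond_at D D1 -> diamond_at E E1 ->
  X = App (Lam D1) E1 \/ bisim (subst 0 E1 D1) X -> diamond_at (App (Lam D) E) X.
Proof.
  intros HM HD1 HE1 IHD IHE HX N2 H2.
  apply wf_app in HM as [HL HE]; apply wf_lam in HL as [HD HD0].
  destruct (par_lam_redex_inv _ _ _ H2) as [D2 [E2 [HD2 [HE2 HN2]]]].
  destruct (IHD _ HD2) as [D3 [HD13 HD23]], (IHE _ HE2) as [E3 [HE13 HE23]].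
  assert (join : forall Di Ei Y, par D Di -> par E Ei -> par Di D3 -> par Ei E3 ->
    Y = App (Lam Di) Ei \/ bisim (subst 0 Ei Di) Y -> par Y (subst 0 E3 D3)).
  { intros Di Ei Y ? ? ? ? [-> | ?].
    - eapply p_beta; [eassumption | eassumption | apply bisim_refl].
    - apply (par_contract_fresh D Di D3 E Ei E3); auto. }
  exists (subst 0 E3 D3); split; [apply (join D1 E1) | apply (join D2 E2)]; auto.
Qed.

Lemma diamond_at_lamd_redex D D1 E E1 X : wf (App (LamD D) (BoxD E)) ->
  par D D1 -> par E E1 -> diamond_at D D1 -> diamond_at E E1 ->
  X = App (LamD D1) (BoxD E1) \/ bisim (subst 0 E1 D1) X ->
  diamond_at (App (LamD D) (BoxD E)) X.
Proof.
  intros HM HD1 HE1 IHD IHE HX N2 H2.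
  apply wf_app in HM as [HL HE]; apply wf_lamd in HL as [HD HD0]; apply wf_boxd in HE.
  destruct (par_lamd_redex_inv _ _ _ H2) as [D2 [E2 [HD2 [HE2 HN2]]]].
  destruct (IHD _ HD2) as [D3 [HD13 HD23]], (IHE _ HE2) as [E3 [HE13 HE23]].
  assert (join : forall Di Ei Y, par D Di -> par E Ei -> par Di D3 -> par Ei E3 ->
    Y = App (LamD Di) (BoxD Ei) \/ bisim (subst 0 Ei Di) Y -> par Y (subst 0 E3 D3)).
  { intros Di Ei Y ? ? ? ? [-> | ?].
    - eapply p_betad; [eassumption | eassumption | apply bisim_refl].
    - apply (par_contract_fresh D Di D3 E Ei E3); auto. }
  exists (subst 0 E3 D3); split; [apply (join D1 E1) | apply (join D2 E2)]; auto.
Qed.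

(* The argument of a coinductive redex is never reduced, so [E] itself serves as
   the joining argument. *)
Lemma diamond_at_lamu_redex D D1 E E1 X : wf (App (LamU D) (BoxU E)) ->
  par D D1 -> bisim E E1 -> diamond_at D D1 ->
  X = App (LamU D1) (BoxU E1) \/ bisim (subst 0 E1 D1) X ->
  diamond_at (App (LamU D) (BoxU E)) X.
Proof.
  intros HM HD1 HE1 IHD HX N2 H2.
  apply wf_app in HM as [HL HE]; apply wf_boxu in HE.
  destruct (par_lamu_redex_inv _ _ _ H2) as [D2 [E2 [HD2 [HE2 HN2]]]].
  destruct (IHD _ HD2) as [D3 [HD13 HD23]].
  assert (join : forall Di Ei Y, par Di D3 -> bisim E Ei ->
    Y = App (LamU Di) (BoxU Ei) \/ bisim (subst 0 Ei Di) Y -> par Y (subst 0 E D3)).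
  { intros Di Ei Y ? ? [-> | ?].
    - eapply p_betau; [eassumption | apply bisim_sym; eassumption | apply bisim_refl].
    - apply (par_contract_bisim Di D3 E Ei); auto. }
  exists (subst 0 E D3); split; [apply (join D1 E1) | apply (join D2 E2)]; auto.
Qed.

Lemma par_lam_inv D X : par (Lam D) X -> exists D', X = Lam D' /\ par D D'.
Proof. intros H; inversion H; subst; eauto. Qed.
Lemma par_lamd_inv D X : par (LamD D) X -> exists D', X = LamD D' /\ par D D'.
Proof. intros H; inversion H; subst; eauto. Qed.
Lemma par_lamu_inv D X : par (LamU D) X -> exists D', X = LamU D' /\ par D D'.
Proof. intros H; inversion H; subst; eauto. Qed.
Lemma par_boxd_inv D X : par (BoxD D) X -> exists D', X = BoxD D' /\ par D D'.
Proof. intros H; inversion H; subst; eauto. Qed.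

Lemma diamond_at_app A A' B B' : wf (App A B) -> par A A' -> par B B' ->
  diamond_at A A' -> diamond_at B B' -> diamond_at (App A B) (App A' B').
Proof.
  intros HM HA HB IHA IHB N2 H2.
  inversion H2 as [|? A2 ? B2 HA2 HB2| | | | | |D ? E| D ? E| D ? E]; subst.
  - destruct (IHA _ HA2) as [A3 [? ?]], (IHB _ HB2) as [B3 [? ?]].
    exists (App A3 B3); auto.
  - destruct (par_lam_inv _ _ HA) as [D1 [-> HD1]].
    refine (diamond_at_lam_redex D D1 B B' _ HM HD1 HB _ IHB (or_introl eq_refl) _ H2).
    apply (diamond_at_congr_inv Lam par_lam_inv p_lam);
      [intros; congruence | exact IHA].
  - destruct (par_lamd_inv _ _ HA) as [D1 [-> HD1]], (par_boxd_inv _ _ HB) as [E1 [-> HE1]].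
    refine (diamond_at_lamd_redex D D1 E E1 _ HM HD1 HE1 _ _ (or_introl eq_refl) _ H2).
    + apply (diamond_at_congr_inv LamD par_lamd_inv p_lamd);
        [intros; congruence | exact IHA].
    + apply (diamond_at_congr_inv BoxD par_boxd_inv p_boxd);
        [intros; congruence | exact IHB].
  - destruct (par_lamu_inv _ _ HA) as [D1 [-> HD1]].
    inversion HB as [| | | | | |? E1 HE1| | |]; subst.
    refine (diamond_at_lamu_redex D D1 E E1 _ HM HD1 HE1 _ (or_introl eq_refl) _ H2).
    apply (diamond_at_congr_inv LamU par_lamu_inv p_lamu);
      [intros; congruence | exact IHA].
Qed.

Lemma par_diamond M N1 : par M N1 -> wf M -> diamond_at M N1.
Proof.
  intros H; induction H; intros HM.
  - intros N2 H2; inversion H2; subst; eauto.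
  - pose proof HM as HM'; apply wf_app in HM' as [? ?]; apply diamond_at_app; auto.
  - apply wf_lam in HM as [? ?]; apply (diamond_at_congr Lam); auto using par_lam_inv.
  - apply wf_lamd in HM as [? ?]; apply (diamond_at_congr LamD); auto using par_lamd_inv.
  - apply wf_lamu in HM; apply (diamond_at_congr LamU); auto using par_lamu_inv.
  - apply wf_boxd in HM; apply (diamond_at_congr BoxD); auto using par_boxd_inv.
  - intros N2 H2; inversion H2; subst.
    exists (BoxU A); split; constructor; apply bisim_sym; auto.
  - pose proof HM as HM'; apply wf_app in HM' as [HL HE]; apply wf_lam in HL as [HD _].
    apply diamond_at_lam_redex with D' E'; auto.
  - pose proof HM as HM'; apply wf_app in HM' as [HL HE];
      apply wf_lamd in HL as [HD _]; apply wf_boxd in HE.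
    apply diamond_at_lamd_redex with D' E'; auto.
  - pose proof HM as HM'; apply wf_app in HM' as [HL _]; apply wf_lamu in HL.
    apply diamond_at_lamu_redex with D' E'; auto.
Qed.

Inductive pars : term -> term -> Prop :=
| ps_refl M N : bisim M N -> pars M N
| ps_step M N P : par M N -> pars N P -> pars M P.

Lemma par_strip M N1 N2 : wf M -> par M N1 -> pars M N2 -> exists N3, pars N1 N3 /\ par N2 N3.
Proof.
  intros HM H1 H2; revert N1 HM H1; induction H2 as [M N E|M N P H HNP IH]; intros N1 HM H1.
  - exists N1; split; [apply ps_refl, bisim_refl |].
    eapply par_bisim_l; [apply bisim_sym, E | exact H1].
  - destruct (par_diamond _ _ H HM _ H1) as [Y [HY1 HY2]].
    destruct (IH Y (par_wf _ _ H HM) HY1) as [Z [HZ1 HZ2]].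
    exists Z; split; [eapply ps_step |]; eauto.
Qed.

Lemma pars_confluent M N L : wf M -> pars M N -> pars M L -> exists P, pars N P /\ pars L P.
Proof.
  intros HM H1; revert L HM; induction H1 as [M N E|M N P H HNP IH]; intros L HM H2.
  - exists L; split; [| apply ps_refl, bisim_refl].
    destruct H2 as [X Y E'|X Y Z HXY HYZ].
    + apply ps_refl; eapply bisim_trans; [apply bisim_sym, E | exact E'].
    + eapply ps_step; [eapply par_bisim_l; [apply bisim_sym, E | exact HXY] | exact HYZ].
  - destruct (par_strip _ _ _ HM H H2) as [Y [HY1 HY2]].
    destruct (IH Y (par_wf _ _ H HM) HY1) as [P0 [HP1 HP2]].
    exists P0; split; [| eapply ps_step]; eauto.
Qed.

(** * Parallel reduction between ->_0 and ->_0^* *)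

Lemma step0_par R M N : step0 M N -> wf_step R M -> par M N.
Proof.
  intros H; induction H as [M N H| | | | | |]; intros HM.
  2-7: inversion HM; subst; eauto using par_refl.
  destruct H; inversion HM as [|? ? HD HE| | | | |]; subst;
    inversion HD; inversion HE; subst; eauto using par_refl, bisim_refl.
Qed.

Lemma red0_par M N : wf M -> red0 M N -> par M N.
Proof.
  intros HM [M' [N' [E1 [H E2]]]].
  eapply par_bisim_l; [exact E1 |]; eapply par_bisim_r; [| exact E2].
  eapply step0_par; [exact H |]; apply wf_unfold; eapply wf_bisim; eauto.
Qed.

Lemma red0s_pars M N : wf M -> red0s M N -> pars M N.
Proof.
  intros HM H; induction H as [M N E|M N P H HNP IH]; [apply ps_refl, E |].
  assert (Hp : par M N) by (apply red0_par; assumption).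
  eapply ps_step; [exact Hp | apply IH; eapply par_wf; eassumption].
Qed.

Lemma red0s_trans M N P : red0s M N -> red0s N P -> red0s M P.
Proof.
  intros H; induction H as [M N E|M N Q H HNQ IH]; intros H2; [|eapply r_step; eauto].
  destruct H2 as [X Y E'|X Y Z [X1 [Y1 [E1 [HXY E2]]]] HYZ].
  - apply r_refl; eapply bisim_trans; eauto.
  - apply r_step with Y; [| exact HYZ].
    exists X1, Y1; split; [eapply bisim_trans; eauto | auto].
Qed.

Lemma red0s_basic M N : basic M N -> red0s M N.
Proof.
  intros H; eapply r_step; [| apply r_refl, bisim_refl].
  exists M, N; repeat split; auto using bisim_refl, s_base.
Qed.

Lemma red0s_congr (f : term -> term) :
  (forall A A', bisim A A' -> bisim (f A) (f A')) ->
  (forall A A', step0 A A' -> step0 (f A) (f A')) ->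
  forall M N, red0s M N -> red0s (f M) (f N).
Proof.
  intros Hb Hs M N H; induction H as [M N E|M N P [X [Y [E1 [HXY E2]]]] HNP IH].
  - apply r_refl; auto.
  - apply r_step with (f N); [exists (f X), (f Y); auto | exact IH].
Qed.

#[local] Hint Constructors bisim step0 : core.
#[local] Hint Resolve bisim_refl : core.

Lemma red0s_app A A' B B' : red0s A A' -> red0s B B' -> red0s (App A B) (App A' B').
Proof.
  intros HA HB; apply red0s_trans with (App A' B).
  - apply (red0s_congr (fun X => App X B)); auto.
  - apply (red0s_congr (fun X => App A' X)); auto.
Qed.

Lemma red0s_lam A A' : red0s A A' -> red0s (Lam A) (Lam A').
Proof. apply red0s_congr; auto. Qed.
Lemma red0s_lamd A A' : red0s A A' -> red0s (LamD A) (LamD A').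
Proof. apply red0s_congr; auto. Qed.
Lemma red0s_lamu A A' : red0s A A' -> red0s (LamU A) (LamU A').
Proof. apply red0s_congr; auto. Qed.
Lemma red0s_boxd A A' : red0s A A' -> red0s (BoxD A) (BoxD A').
Proof. apply red0s_congr; auto. Qed.

Lemma par_red0s M N : par M N -> red0s M N.
Proof.
  intros H; induction H;
    eauto using r_refl, red0s_app, red0s_lam, red0s_lamd, red0s_lamu, red0s_boxd.
  - eapply red0s_trans; [apply red0s_app; [apply red0s_lam|]; eauto |].
    apply red0s_basic; constructor; auto.
  - eapply red0s_trans; [apply red0s_app; [apply red0s_lamd | apply red0s_boxd]; eauto |].
    apply red0s_basic; constructor; auto.
  - eapply red0s_trans; [apply red0s_app; [apply red0s_lamu; eauto | apply r_refl; auto] |].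
    apply red0s_basic; constructor; eapply bisim_trans; [apply subst_bisim |]; eauto.
Qed.

Lemma pars_red0s M N : pars M N -> red0s M N.
Proof.
  intros H; induction H; [apply r_refl; auto | eapply red0s_trans; eauto using par_red0s].
Qed.

(** * Typable terms are well formed *)

Lemma typ_fresh : forall G M x, typ G M -> G x = None -> fresh x M.
Proof.
  cofix CH; intros G M x [HT] Hx; destruct HT as
    [G y [Hy _]|G y [Hy _]|G y [Hy _]|G G1 G2 A B Hs HA HB
    |G A HA|G A HA|G A HA|G A HA|G A Hmi HA|G A Hmc HA].
  1-3: constructor; intros ->; congruence.
  1: { specialize (Hs x); rewrite Hx in Hs; destruct Hs as [HG1 HG2].
       constructor; [apply (CH G1); [constructor; exact HA | exact HG1]
                    |apply (CH G2); [constructor; exact HB | exact HG2]]. }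
  1-4: constructor; eapply CH; [constructor; exact HA | exact Hx].
  1: constructor; eapply CH; [constructor; exact HA | unfold mi_env; rewrite Hx; reflexivity].
  constructor; eapply CH; [exact HA | unfold mc_env; rewrite Hx; reflexivity].
Qed.

Definition mc_discarded (o : option kind) : Prop :=
  match o with None | Some KLin | Some KDown | Some KHash => True | _ => False end.

Lemma split_env_discarded G G1 G2 y : split_env G G1 G2 ->
  mc_discarded (G y) -> mc_discarded (G1 y) /\ mc_discarded (G2 y).
Proof.
  intros Hs; specialize (Hs y); destruct (G y) as [[]|]; simpl; intros Hy; try contradiction;
    [ destruct Hs as [[-> ->]|[-> ->]] | destruct Hs as [[-> ->]|[-> ->]]
    | destruct Hs as [-> ->] | destruct Hs as [-> ->] ]; simpl; auto.
Qed.

Lemma typ_step_boxu_fresh G M x : typ_step typ G M -> mc_discarded (G x) -> boxu_fresh x M.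
Proof.
  intros HT; revert x;
    induction HT as [| | |G G1 G2 A B Hs _ IHA _ IHB| | | | |G A Hmi _ IH|G A Hmc HA];
    intros y Hy; auto.
  - destruct (split_env_discarded _ _ _ y Hs Hy); auto.
  - constructor; apply IH; specialize (Hmi y); unfold mi_env.
    destruct (G y) as [[]|]; simpl in *; auto.
  - constructor; eapply typ_fresh; [exact HA |]; unfold mc_env.
    destruct (G y) as [[]|]; simpl in *; auto; contradiction.
Qed.

Lemma typ_wf G M : typ G M -> wf M.
Proof.
  intros HT; exists (fun M => exists G, typ G M); split; [|eauto].
  clear; intros X [G [HT]]; induction HT; eauto.
  all: constructor; [assumption | eapply typ_step_boxu_fresh; [eassumption | exact I]].
Qed.

Theorem mainTheorem20 (M N L : term) :
  is_term M -> red0s M N -> red0s M L ->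
  exists P, red0s N P /\ red0s L P.
Proof.
  intros [G [_ HT]] HN HL.
  pose proof (typ_wf _ _ HT) as HM.
  destruct (pars_confluent _ _ _ HM (red0s_pars _ _ HM HN) (red0s_pars _ _ HM HL))
    as [P [HNP HLP]].
  exists P; split; apply pars_red0s; assumption.
Qed.
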